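(* Let $b\ge2$ and let $d$ be a base-$b$ martingale with $d(\lambda)=1$ and $d(w)\le |w|^c$ for all nonempty $w$. Then there is $c'>0$ such that for every sufficiently long $y\in\{0,1\}^*$, with $m(y)=\lceil |y|/\log_2 b+c'\log_2|y|\rceil$, \[|d^{(2)}(y)-d^{(2)}_{m(y)}(y)|\le 1/|y|^3,\] where $d^{(2)}(y)=2^{|y|}\mu(y)$ and $d^{(2)}_m(y)=2^{|y|}\mu_m(y)$.
   Context: $\Sigma_b=\{0,\dots,b-1\}$. A base-$b$ martingale is $d:\Sigma_b^*\to[0,\infty)$ with $d(w)=\frac1b\sum_{a}d(wa)$. $[w]_b=[x,x+b^{-|w|})$ with $x=\sum_{i=1}^{|w|}w[i-1]b^{-i}$, similarly $[y]_2$. $\gamma(w)=b^{-|w|}d(w)$ extends to a Borel probability measure $\hat\gamma$ on $[0,1)$ with $\hat\gamma([w]_b)=\gamma(w)$; $\mu(y)=\hat\gamma([y]_2)$; $\mu_m(y)=\sum\{\gamma(w):|w|=m,\ [w]_b\cap[y]_2\ne\emptyset\}$. *)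

From Stdlib Require Import Reals Lra Lia List ClassicalEpsilon.
Import ListNotations.
Open Scope R_scope.

Definition is_word (b : nat) (w : list nat) : Prop := Forall (fun a => (a < b)%nat) w.

Fixpoint words (b m : nat) : list (list nat) :=
  match m with
  | O => [ [] ]
  | S m' => flat_map (fun w => map (fun a => w ++ [a]) (seq 0 b)) (words b m')
  end.

Definition sumR {A} (f : A -> R) (l : list A) : R :=
  fold_right (fun x acc => f x + acc) 0 l.

Definition martingale (b : nat) (d : list nat -> R) : Prop :=
  (forall w, is_word b w -> 0 <= d w) /\
  (forall w, is_word b w ->
     d w = / INR b * sumR (fun a => d (w ++ [a])) (seq 0 b)).

(* left endpoint x = sum_i w[i] b^{-(i+1)} of [w]_b *)
Fixpoint left_pt (b : nat) (w : list nat) : R :=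
  match w with
  | [] => 0
  | a :: w' => (INR a + left_pt b w') / INR b
  end.

Definition in_cyl (b : nat) (w : list nat) (z : R) : Prop :=
  left_pt b w <= z < left_pt b w + / INR b ^ length w.

Definition gamma (b : nat) (d : list nat -> R) (w : list nat) : R :=
  d w / INR b ^ length w.

Definition ifP (P : Prop) (x : R) : R :=
  if excluded_middle_informative P then x else 0.

Definition cdf_approx (b : nat) (d : list nat -> R) (t : R) (m : nat) : R :=
  sumR (fun w => ifP (left_pt b w + / INR b ^ m <= t) (gamma b d w)) (words b m).

(* F(t) = gammahat([0,t)) = lim_m cdf_approx (continuity from below) *)
Definition cdf (b : nat) (d : list nat -> R) (t : R) : R :=
  epsilon (inhabits 0) (fun l => Un_cv (cdf_approx b d t) l).

(* mu(y) = gammahat([y]_2) *)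
Definition mu (b : nat) (d : list nat -> R) (y : list nat) : R :=
  cdf b d (left_pt 2 y + / 2 ^ length y) - cdf b d (left_pt 2 y).

Definition mu_m (b : nat) (d : list nat -> R) (m : nat) (y : list nat) : R :=
  sumR (fun w => ifP (exists z, in_cyl b w z /\ in_cyl 2 y z) (gamma b d w))
       (words b m).

Definition dd2 (b : nat) (d : list nat -> R) (y : list nat) : R :=
  2 ^ length y * mu b d y.

Definition dd2_m (b : nat) (d : list nat -> R) (m : nat) (y : list nat) : R :=
  2 ^ length y * mu_m b d m y.

Definition log2 (x : R) : R := ln x / ln 2.

Definition ceilZ (r : R) : Z := (- Int_part (- r))%Z.

Definition m_of (b : nat) (c' : R) (y : list nat) : nat :=
  Z.to_nat (ceilZ (INR (length y) / log2 (INR b) + c' * log2 (INR (length y)))).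

From Stdlib Require Import Reals List.
From Stdlib Require Import Lra Lia ZArith ClassicalEpsilon Classical.
Import ListNotations.
Open Scope R_scope.

(* Let F be the distribution function of the measure of d. At level m, the
   mass of the b-adic cylinders contained in [0,t) increases to F(t), the mass
   of those starting left of t decreases, and the two differ by the mass of the
   one cylinder straddling t. So F(t) is known up to max_{|w|=m} gamma(w) <=
   m^c b^-m, and since mu_m(y) is exactly the outer sum at the right end of
   [y]_2 minus the inner sum at its left end, |mu(y) - mu_m(y)| <= 2 m^c b^-m.
   With c' = (|c| + 4) / log2 b the level m satisfies b^m >= 2^|y| |y|^(|c|+4)
   and m = O(|y|), so 2^|y| * 2 m^c b^-m = O(|y|^-4). *)

Lemma ifP_true (P : Prop) (x : R) : P -> ifP P x = x.
Proof. intros H; unfold ifP; destruct (excluded_middle_informative P); tauto. Qed.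

Lemma ifP_false (P : Prop) (x : R) : ~ P -> ifP P x = 0.
Proof. intros H; unfold ifP; destruct (excluded_middle_informative P); tauto. Qed.

Lemma ifP_iff (P Q : Prop) (x : R) : (P <-> Q) -> ifP P x = ifP Q x.
Proof.
  intros HPQ; destruct (classic P) as [HP | HP].
  - rewrite !ifP_true; tauto.
  - rewrite !ifP_false; tauto.
Qed.

Lemma ifP_mono (P Q : Prop) (x : R) : 0 <= x -> (P -> Q) -> ifP P x <= ifP Q x.
Proof.
  intros Hx HPQ; destruct (classic P) as [HP | HP].
  - rewrite !ifP_true; auto; lra.
  - rewrite (ifP_false P) by exact HP; unfold ifP.
    destruct (excluded_middle_informative Q); lra.
Qed.

Lemma ifP_sub (P Q : Prop) (x : R) :
  (Q -> P) -> ifP P x - ifP Q x = ifP (P /\ ~ Q) x.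
Proof.
  intros HQP; destruct (classic Q) as [HQ | HQ].
  - rewrite !ifP_true, ifP_false by tauto; lra.
  - rewrite (ifP_false Q), Rminus_0_r by exact HQ; apply ifP_iff; tauto.
Qed.

Lemma sumR_app {A : Type} (f : A -> R) (l1 l2 : list A) :
  sumR f (l1 ++ l2) = sumR f l1 + sumR f l2.
Proof. induction l1; simpl; [lra | rewrite IHl1; lra]. Qed.

Lemma sumR_flat_map {A B : Type} (f : B -> R) (g : A -> list B) (l : list A) :
  sumR f (flat_map g l) = sumR (fun x => sumR f (g x)) l.
Proof. induction l; simpl; [lra | rewrite sumR_app, IHl; lra]. Qed.

Lemma sumR_map {A B : Type} (f : B -> R) (g : A -> B) (l : list A) :
  sumR f (map g l) = sumR (fun x => f (g x)) l.
Proof. induction l; simpl; [lra | rewrite IHl; lra]. Qed.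

Lemma sumR_le {A : Type} (f g : A -> R) (l : list A) :
  (forall x, In x l -> f x <= g x) -> sumR f l <= sumR g l.
Proof.
  induction l as [|x l IH]; simpl; intros H; [lra|].
  pose proof (H x (or_introl eq_refl)); pose proof (IH (fun y h => H y (or_intror h))); lra.
Qed.

Lemma sumR_ext {A : Type} (f g : A -> R) (l : list A) :
  (forall x, In x l -> f x = g x) -> sumR f l = sumR g l.
Proof.
  intros H; apply Rle_antisym; apply sumR_le; intros x Hx; rewrite (H x Hx); lra.
Qed.

Lemma sumR_const0 {A : Type} (l : list A) : sumR (fun _ => 0) l = 0.
Proof. induction l; simpl; lra. Qed.

Lemma sumR_minus {A : Type} (f g : A -> R) (l : list A) :
  sumR (fun x => f x - g x) l = sumR f l - sumR g l.
Proof. induction l; simpl; [lra | rewrite IHl; lra]. Qed.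

Lemma sumR_scal {A : Type} (f : A -> R) (k : R) (l : list A) :
  sumR (fun x => k * f x) l = k * sumR f l.
Proof. induction l; simpl; [lra | rewrite IHl; lra]. Qed.

Lemma ifP_sumR {A : Type} (P : Prop) (f : A -> R) (l : list A) :
  ifP P (sumR f l) = sumR (fun x => ifP P (f x)) l.
Proof.
  destruct (classic P) as [HP | HP].
  - rewrite ifP_true by exact HP; apply sumR_ext; intros; symmetry; apply ifP_true, HP.
  - rewrite ifP_false, <- (sumR_const0 l) by exact HP.
    apply sumR_ext; intros; symmetry; apply ifP_false, HP.
Qed.

Lemma sumR_ifP_unique_le {A : Type} (P : A -> Prop) (f : A -> R) (l : list A) (K : R) :
  NoDup l -> (forall x y, In x l -> In y l -> P x -> P y -> x = y) ->
  (forall x, In x l -> f x <= K) -> 0 <= K ->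
  sumR (fun x => ifP (P x) (f x)) l <= K.
Proof.
  induction l as [|x l IH]; intros Hnd Huniq Hf HK; simpl; [lra|].
  inversion Hnd as [|? ? Hx Hl]; subst.
  destruct (classic (P x)) as [Px | Px].
  - assert (Hrest : sumR (fun y => ifP (P y) (f y)) l = 0).
    { rewrite <- (sumR_const0 l); apply sumR_ext; intros y Hy; apply ifP_false; intros Py.
      assert (x = y) by (apply Huniq; simpl; auto); subst; tauto. }
    rewrite ifP_true, Hrest by exact Px; pose proof (Hf x (or_introl eq_refl)); lra.
  - rewrite ifP_false, Rplus_0_l by exact Px.
    apply IH; auto; intros; [apply Huniq | apply Hf]; simpl; auto.
Qed.

Lemma is_word_snoc (b : nat) (w : list nat) (a : nat) :
  is_word b w -> (a < b)%nat -> is_word b (w ++ [a]).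
Proof. intros Hw Ha; apply Forall_app; split; [exact Hw | constructor; auto]. Qed.

Lemma sumR_words_S (b m : nat) (f : list nat -> R) :
  sumR f (words b (S m)) =
  sumR (fun w => sumR (fun a => f (w ++ [a])) (seq 0 b)) (words b m).
Proof.
  simpl words; rewrite sumR_flat_map; apply sumR_ext; intros; apply sumR_map.
Qed.

Lemma in_words (b m : nat) (w : list nat) :
  In w (words b m) -> is_word b w /\ length w = m.
Proof.
  revert w; induction m as [|m IH]; intros w Hw; simpl in Hw.
  - destruct Hw as [<- | []]; split; [constructor | reflexivity].
  - apply in_flat_map in Hw as [v [Hv Hw]].
    apply in_map_iff in Hw as [a [<- Ha]]; apply in_seq in Ha.
    destruct (IH v Hv) as [Hvw Hvl]; split.
    + apply is_word_snoc; [exact Hvw | lia].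
    + rewrite length_app; simpl; lia.
Qed.

Lemma NoDup_flat_map {A B : Type} (f : A -> list B) (l : list A) :
  NoDup l -> (forall x, In x l -> NoDup (f x)) ->
  (forall x y z, In x l -> In y l -> In z (f x) -> In z (f y) -> x = y) ->
  NoDup (flat_map f l).
Proof.
  induction l as [|x l IH]; intros Hnd Hf Hdisj; simpl; [constructor|].
  inversion Hnd; subst; apply NoDup_app.
  - apply Hf; left; auto.
  - apply IH; auto.
    + intros; apply Hf; right; auto.
    + intros; eapply Hdisj; eauto; right; auto.
  - intros z Hz Hz'; apply in_flat_map in Hz' as [y [Hy Hzy]].
    assert (x = y) by (eapply Hdisj; eauto; [left | right]; auto); subst; tauto.
Qed.

Lemma words_NoDup (b m : nat) : NoDup (words b m).
Proof.
  induction m; simpl; [repeat constructor; simpl; tauto|].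
  apply NoDup_flat_map; auto.
  - intros w _; apply NoDup_map_NoDup_ForallPairs; [|apply seq_NoDup].
    intros a a' _ _ E; apply app_inj_tail in E; tauto.
  - intros w v z _ _ Hw Hv.
    apply in_map_iff in Hw as [a [<- _]]; apply in_map_iff in Hv as [a' [E _]].
    apply app_inj_tail in E; intuition.
Qed.

Lemma Rdiv_nonneg (x y : R) : 0 <= x -> 0 < y -> 0 <= x / y.
Proof. intros; apply Rmult_le_pos; [|left; apply Rinv_0_lt_compat]; lra. Qed.

Lemma Rdiv_le_compat_r (x y z : R) : 0 < z -> x <= y -> x / z <= y / z.
Proof. intros; apply Rmult_le_compat_r; [left; apply Rinv_0_lt_compat|]; lra. Qed.

Lemma Rdiv_le_1 (x y : R) : 0 < y -> x <= y -> x / y <= 1.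
Proof. intros; rewrite <- (Rdiv_diag y) by lra; apply Rdiv_le_compat_r; lra. Qed.

Lemma INR_lt_succ_le (a n : nat) : (a < n)%nat -> INR a + 1 <= INR n.
Proof. intros Ha; rewrite <- S_INR; apply le_INR; lia. Qed.

Section Cylinders.
Variable b : nat.
Hypothesis Hb : (2 <= b)%nat.

Lemma INR_b_pos : 0 < INR b.
Proof. apply lt_0_INR; lia. Qed.

Lemma INR_b_ge_2 : 2 <= INR b.
Proof. replace 2 with (INR 2) by (simpl; lra); apply le_INR, Hb. Qed.

Lemma left_pt_snoc (w : list nat) (a : nat) :
  left_pt b (w ++ [a]) = left_pt b w + INR a / INR b ^ S (length w).
Proof.
  pose proof INR_b_pos.
  induction w as [|x w IH]; simpl.
  - field; lra.
  - rewrite IH; simpl pow; field; split; [apply pow_nonzero|]; lra.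
Qed.

Lemma child_cylinder_sub (w : list nat) (a : nat) : (a < b)%nat ->
  left_pt b w <= left_pt b (w ++ [a]) /\
  left_pt b (w ++ [a]) + / INR b ^ S (length w) <= left_pt b w + / INR b ^ length w.
Proof.
  intros Ha; pose proof INR_b_pos.
  rewrite left_pt_snoc; unfold Rdiv.
  set (u := / INR b ^ S (length w)).
  assert (Hu : 0 < u) by (apply Rinv_0_lt_compat, pow_lt; lra).
  assert (Hparent : / INR b ^ length w = INR b * u)
    by (unfold u; simpl; field; split; [apply pow_nonzero|]; lra).
  rewrite Hparent; pose proof (pos_INR a); pose proof (INR_lt_succ_le a b Ha).
  split; nra.
Qed.

Lemma cylinder_in_unit (w : list nat) : is_word b w ->
  0 <= left_pt b w /\ left_pt b w + / INR b ^ length w <= 1.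
Proof.
  pose proof INR_b_pos.
  induction w as [|a w IH]; intros Hw; simpl; [lra|].
  inversion Hw as [|? ? Ha Hw']; subst; destruct (IH Hw') as [Hl Hr].
  pose proof (pos_INR a); pose proof (INR_lt_succ_le a b Ha).
  replace ((INR a + left_pt b w) / INR b + / (INR b * INR b ^ length w))
    with ((INR a + (left_pt b w + / INR b ^ length w)) / INR b)
    by (field; split; [apply pow_nonzero|]; lra).
  split; [apply Rdiv_nonneg | apply Rdiv_le_1]; lra.
Qed.

Lemma cylinders_disjoint (w v : list nat) :
  is_word b w -> is_word b v -> length w = length v -> w <> v ->
  left_pt b w + / INR b ^ length w <= left_pt b v \/
  left_pt b v + / INR b ^ length w <= left_pt b w.
Proof.
  pose proof INR_b_pos.
  revert v; induction w as [|a w IH]; intros v Hw Hv Hlen Hne.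
  - destruct v; simpl in Hlen; [tauto | lia].
  - destruct v as [|a' v]; simpl in Hlen; [lia|]; injection Hlen as Hlen.
    inversion Hw as [|? ? Ha Hw']; inversion Hv as [|? ? Ha' Hv']; subst.
    pose proof (cylinder_in_unit w Hw'); pose proof (cylinder_in_unit v Hv').
    assert (Hright : forall x y, (x + y) / INR b + / INR b ^ length (a :: w)
                                 = (x + (y + / INR b ^ length w)) / INR b)
      by (intros; simpl; field; split; [apply pow_nonzero|]; lra).
    simpl left_pt; rewrite !Hright; rewrite <- Hlen in *.
    destruct (Nat.lt_trichotomy a a') as [Hlt | [<- | Hgt]].
    + pose proof (INR_lt_succ_le a a' Hlt); left; apply Rdiv_le_compat_r; lra.
    + assert (Hne' : w <> v) by congruence.
      destruct (IH v Hw' Hv' Hlen Hne'); [left | right]; apply Rdiv_le_compat_r; lra.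
    + pose proof (INR_lt_succ_le a' a Hgt); right; apply Rdiv_le_compat_r; lra.
Qed.

End Cylinders.

Definition cdf_outer (b : nat) (d : list nat -> R) (t : R) (m : nat) : R :=
  sumR (fun w => ifP (left_pt b w < t) (gamma b d w)) (words b m).

Section Approximations.
Variables (b : nat) (d : list nat -> R).
Hypothesis Hb : (2 <= b)%nat.
Hypothesis Hd : martingale b d.

Lemma gamma_nonneg (w : list nat) : is_word b w -> 0 <= gamma b d w.
Proof.
  intros Hw; apply Rdiv_nonneg; [apply Hd, Hw | apply pow_lt, INR_b_pos, Hb].
Qed.

Lemma gamma_children (w : list nat) : is_word b w ->
  sumR (fun a => gamma b d (w ++ [a])) (seq 0 b) = gamma b d w.
Proof.
  intros Hw; pose proof (INR_b_pos b Hb); pose proof (pow_lt _ (length w) H).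
  rewrite (sumR_ext _ (fun a => / INR b ^ S (length w) * d (w ++ [a]))).
  - rewrite sumR_scal; unfold gamma; rewrite (proj2 Hd w Hw); simpl pow; field; lra.
  - intros a _; unfold gamma; rewrite length_app, Nat.add_1_r; apply Rmult_comm.
Qed.

Lemma level_sum_refine (P Q : list nat -> Prop) (m : nat) :
  (forall w a, In w (words b m) -> (a < b)%nat -> P w -> Q (w ++ [a])) ->
  sumR (fun w => ifP (P w) (gamma b d w)) (words b m) <=
  sumR (fun v => ifP (Q v) (gamma b d v)) (words b (S m)).
Proof.
  intros HPQ; rewrite sumR_words_S; apply sumR_le; intros w Hw.
  destruct (in_words _ _ _ Hw) as [Hww _].
  rewrite <- (gamma_children w Hww), ifP_sumR; apply sumR_le; intros a Ha.
  apply in_seq in Ha; apply ifP_mono.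
  - apply gamma_nonneg, is_word_snoc; [exact Hww | lia].
  - apply HPQ; [exact Hw | lia].
Qed.

Lemma level_sum_coarsen (P Q : list nat -> Prop) (m : nat) :
  (forall w a, In w (words b m) -> (a < b)%nat -> Q (w ++ [a]) -> P w) ->
  sumR (fun v => ifP (Q v) (gamma b d v)) (words b (S m)) <=
  sumR (fun w => ifP (P w) (gamma b d w)) (words b m).
Proof.
  intros HQP; rewrite sumR_words_S; apply sumR_le; intros w Hw.
  destruct (in_words _ _ _ Hw) as [Hww _].
  rewrite <- (gamma_children w Hww), ifP_sumR; apply sumR_le; intros a Ha.
  apply in_seq in Ha; apply ifP_mono.
  - apply gamma_nonneg, is_word_snoc; [exact Hww | lia].
  - apply HQP; [exact Hw | lia].
Qed.

Lemma cdf_approx_le_S (t : R) (m : nat) : cdf_approx b d t m <= cdf_approx b d t (S m).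
Proof.
  apply level_sum_refine; intros w a Hw Ha Hright.
  destruct (in_words _ _ _ Hw) as [_ <-].
  pose proof (child_cylinder_sub b Hb w a Ha); lra.
Qed.

Lemma cdf_outer_S_le (t : R) (m : nat) : cdf_outer b d t (S m) <= cdf_outer b d t m.
Proof.
  apply level_sum_coarsen; intros w a Hw Ha Hleft.
  pose proof (child_cylinder_sub b Hb w a Ha); lra.
Qed.

Lemma cdf_outer_antitone (t : R) (m k : nat) :
  (m <= k)%nat -> cdf_outer b d t k <= cdf_outer b d t m.
Proof.
  induction 1 as [|k _ IH]; [lra|]; pose proof (cdf_outer_S_le t k); lra.
Qed.

Lemma cdf_approx_le_outer (t : R) (m : nat) : cdf_approx b d t m <= cdf_outer b d t m.
Proof.
  apply sumR_le; intros w Hw; apply ifP_mono.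
  - apply gamma_nonneg, (in_words _ _ _ Hw).
  - pose proof (Rinv_0_lt_compat _ (pow_lt _ m (INR_b_pos b Hb))); lra.
Qed.

Lemma cdf_outer_sub_approx_le (t : R) (m : nat) (K : R) :
  0 <= K -> (forall w, In w (words b m) -> gamma b d w <= K) ->
  cdf_outer b d t m - cdf_approx b d t m <= K.
Proof.
  intros HK Hgamma; pose proof (Rinv_0_lt_compat _ (pow_lt _ m (INR_b_pos b Hb))).
  unfold cdf_outer, cdf_approx; rewrite <- sumR_minus.
  rewrite (sumR_ext _ (fun w => ifP (left_pt b w < t /\ ~ left_pt b w + / INR b ^ m <= t)
                                    (gamma b d w)))
    by (intros; apply ifP_sub; lra).
  apply sumR_ifP_unique_le; auto using words_NoDup.
  intros w v Hw Hv Pw Pv.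
  destruct (in_words _ _ _ Hw) as [Hww Hwl], (in_words _ _ _ Hv) as [Hvw Hvl].
  destruct (list_eq_dec Nat.eq_dec w v) as [|Hne]; [assumption|].
  destruct (cylinders_disjoint b Hb w v Hww Hvw ltac:(congruence) Hne); rewrite Hwl in *; lra.
Qed.

Lemma cdf_squeeze (t : R) (m : nat) :
  cdf_approx b d t m <= cdf b d t <= cdf_outer b d t m.
Proof.
  set (u := cdf_approx b d t).
  assert (Hgrow : Un_growing u) by (intro; apply cdf_approx_le_S).
  assert (Hbound : forall k, u k <= cdf_outer b d t m).
  { intros k; unfold u; destruct (Nat.le_ge_cases k m) as [Hkm | Hmk].
    - pose proof (tech9 u Hgrow k m Hkm); pose proof (cdf_approx_le_outer t m); unfold u in *; lra.
    - pose proof (cdf_outer_antitone t m k Hmk); pose proof (cdf_approx_le_outer t k); lra. }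
  destruct (growing_cv u Hgrow) as [l Hl].
  { exists (cdf_outer b d t m); intros x [k ->]; apply Hbound. }
  assert (Hcdf : Un_cv u (cdf b d t)) by (unfold cdf; apply epsilon_spec; exists l; exact Hl).
  split; [apply (growing_ineq u); assumption|].
  apply (Rle_cv_lim (Un := u) (Vn := fun _ => cdf_outer b d t m)); auto.
  intros e He; exists 0%nat; intros; unfold Rdist; rewrite Rminus_diag, Rabs_R0; exact He.
Qed.

Lemma mu_m_eq (m : nat) (y : list nat) :
  mu_m b d m y = cdf_outer b d (left_pt 2 y + / 2 ^ length y) m
                 - cdf_approx b d (left_pt 2 y) m.
Proof.
  unfold mu_m, cdf_outer, cdf_approx; rewrite <- sumR_minus; apply sumR_ext.
  intros w Hw; destruct (in_words _ _ _ Hw) as [_ Hwl].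
  pose proof (Rinv_0_lt_compat _ (pow_lt _ m (INR_b_pos b Hb))).
  pose proof (Rinv_0_lt_compat _ (pow_lt 2 (length y) ltac:(lra))).
  rewrite ifP_sub by lra; apply ifP_iff.
  unfold in_cyl; replace (INR 2) with 2 by (simpl; lra); rewrite Hwl; split.
  - intros [z [Hzw Hzy]]; lra.
  - intros [Hlt Hnle]; exists (Rmax (left_pt b w) (left_pt 2 y)).
    unfold Rmax; destruct (Rle_dec (left_pt b w) (left_pt 2 y)); lra.
Qed.

Lemma dd2_sub_dd2_m_le (m : nat) (y : list nat) (K : R) :
  0 <= K -> (forall w, In w (words b m) -> gamma b d w <= K) ->
  Rabs (dd2 b d y - dd2_m b d m y) <= 2 ^ length y * (2 * K).
Proof.
  intros HK Hgamma; unfold dd2, dd2_m; rewrite <- Rmult_minus_distr_l.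
  pose proof (pow_lt 2 (length y) ltac:(lra)).
  rewrite Rabs_mult, Rabs_right by lra; apply Rmult_le_compat_l; [lra|].
  rewrite mu_m_eq; unfold mu.
  set (l := left_pt 2 y); set (r := l + / 2 ^ length y).
  pose proof (cdf_squeeze l m); pose proof (cdf_squeeze r m).
  pose proof (cdf_outer_sub_approx_le l m K HK Hgamma).
  pose proof (cdf_outer_sub_approx_le r m K HK Hgamma).
  apply Rabs_le; lra.
Qed.

End Approximations.

Lemma ln_le (x y : R) : 0 < x -> x <= y -> ln x <= ln y.
Proof. intros Hx [Hxy | <-]; [left; apply ln_increasing |]; lra. Qed.

Lemma ln_nonneg (x : R) : 1 <= x -> 0 <= ln x.
Proof. intros Hx; rewrite <- ln_1; apply ln_le; lra. Qed.

Lemma ln_2_pos : 0 < ln 2.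
Proof. pose proof ln_lt_2; lra. Qed.

Lemma log2_nonneg (x : R) : 1 <= x -> 0 <= log2 x.
Proof. intros Hx; apply Rdiv_nonneg; [apply ln_nonneg, Hx | apply ln_2_pos]. Qed.

Lemma log2_le_double (x : R) : 1 <= x -> log2 x <= 2 * x.
Proof.
  intros Hx; pose proof ln_lt_2; pose proof (exp_ineq1_le (ln x)).
  rewrite exp_ln in * by lra; unfold log2.
  apply (Rmult_le_reg_r (ln 2)); [lra|]; unfold Rdiv; rewrite Rmult_assoc, Rinv_l; nra.
Qed.

Lemma Rpower_div_log2 (a y : R) : 1 < a -> Rpower a (y / log2 a) = Rpower 2 y.
Proof.
  intros Ha; pose proof ln_2_pos; pose proof (ln_increasing 1 a ltac:(lra) Ha).
  rewrite ln_1 in *; unfold Rpower, log2; f_equal; field; lra.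
Qed.

Lemma Rpower_log2 (x : R) : 0 < x -> Rpower 2 (log2 x) = x.
Proof.
  intros Hx; pose proof ln_2_pos; unfold Rpower, log2.
  replace (ln x / ln 2 * ln 2) with (ln x) by (field; lra); apply exp_ln, Hx.
Qed.

Lemma ceilZ_bounds (x : R) : 0 <= x -> x <= INR (Z.to_nat (ceilZ x)) < x + 1.
Proof.
  intros Hx; destruct (base_Int_part (- x)) as [Hlow Hup].
  unfold ceilZ; set (z := Int_part (- x)) in *.
  assert (Hz : (0 <= - z)%Z) by (apply le_IZR; rewrite opp_IZR; simpl; lra).
  rewrite INR_IZR_INZ, Z2Nat.id, opp_IZR by exact Hz; lra.
Qed.

Section LevelChoice.
Variables (b : nat) (E : R) (y : list nat).
Hypothesis Hb : (2 <= b)%nat.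
Hypothesis HE : 0 <= E.
Hypothesis Hy : (1 <= length y)%nat.

Let n : R := INR (length y).
Let m : nat := m_of b (E / log2 (INR b)) y.
Let x : R := (n + E * log2 n) / log2 (INR b).

Lemma log2_b_ge_1 : 1 <= log2 (INR b).
Proof.
  pose proof ln_2_pos; pose proof (INR_b_ge_2 b Hb); unfold log2.
  rewrite <- (Rdiv_diag (ln 2)) by lra; apply Rdiv_le_compat_r, ln_le; lra.
Qed.

Lemma INR_length_ge_1 : 1 <= n.
Proof. replace 1 with (INR 1) by reflexivity; apply le_INR, Hy. Qed.

Lemma x_pos : 0 < x.
Proof.
  pose proof INR_length_ge_1; pose proof log2_b_ge_1; pose proof (log2_nonneg n INR_length_ge_1).
  apply Rdiv_lt_0_compat; nra.
Qed.

Lemma m_of_bounds : x <= INR m < x + 1.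
Proof.
  pose proof log2_b_ge_1; pose proof x_pos.
  unfold m, m_of; fold n.
  replace (n / log2 (INR b) + E / log2 (INR b) * log2 n) with x by (unfold x; field; lra).
  apply ceilZ_bounds; lra.
Qed.

Lemma m_of_ge_1 : (1 <= m)%nat.
Proof.
  pose proof m_of_bounds; pose proof x_pos.
  destruct m; [simpl in *; lra | lia].
Qed.

Lemma m_of_le_linear : INR m <= (2 + 2 * E) * n.
Proof.
  pose proof m_of_bounds; pose proof INR_length_ge_1; pose proof log2_b_ge_1.
  pose proof (log2_le_double n INR_length_ge_1); pose proof (log2_nonneg n INR_length_ge_1).
  assert (x <= n + E * log2 n).
  { unfold x; rewrite <- (Rdiv_1_r (n + E * log2 n)) at 2.
    apply Rmult_le_compat_l; [nra|]; apply Rinv_le_contravar; lra. }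
  nra.
Qed.

Lemma pow_m_of_ge : 2 ^ length y * Rpower n E <= INR b ^ m.
Proof.
  pose proof (INR_b_ge_2 b Hb); pose proof m_of_bounds; pose proof INR_length_ge_1.
  rewrite <- (Rpower_pow m (INR b)), <- (Rpower_pow (length y) 2) by lra.
  rewrite <- (Rpower_log2 n), Rpower_mult, <- Rpower_plus by lra.
  rewrite <- (Rpower_div_log2 (INR b)) by lra.
  apply Rle_Rpower; [lra|]; unfold x in *; fold n; rewrite Rmult_comm; lra.
Qed.

End LevelChoice.

Lemma level_mass_decay (b : nat) (c : R) : (2 <= b)%nat ->
  exists N : nat, (1 <= N)%nat /\ forall y : list nat, (N <= length y)%nat ->
    let m := m_of b ((Rabs c + 4) / log2 (INR b)) y in
    2 ^ length y * (2 * (Rpower (INR m) c / INR b ^ m)) <= 1 / INR (length y) ^ 3.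
Proof.
  intros Hb; set (E := Rabs c + 4); set (K := 2 + 2 * E).
  assert (HE : 0 <= E) by (pose proof (Rabs_pos c); unfold E; lra).
  assert (HK : 0 < K) by (unfold K; lra).
  assert (HKc : 0 < Rpower K (Rabs c)) by apply exp_pos.
  destruct (INR_archimed 1 (2 * Rpower K (Rabs c)) ltac:(lra)) as [N0 HN0].
  exists (S N0); split; [lia|]; intros y Hy m.
  assert (Hy1 : (1 <= length y)%nat) by lia.
  set (n := INR (length y)).
  pose proof (INR_length_ge_1 y Hy1) as Hn; fold n in Hn.
  assert (Hn_large : 2 * Rpower K (Rabs c) <= n).
  { apply le_INR in Hy; rewrite S_INR in Hy; pose proof (pos_INR N0); unfold n; lra. }
  pose proof (m_of_ge_1 b E y Hb HE Hy1) as Hm1; fold m in Hm1.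
  assert (HmR : 1 <= INR m) by (replace 1 with (INR 1) by reflexivity; apply le_INR, Hm1).
  assert (Hmass : Rpower (INR m) c <= Rpower K (Rabs c) * Rpower n (Rabs c)).
  { rewrite Rpower_mult_distr by lra.
    apply Rle_trans with (Rpower (INR m) (Rabs c)).
    - apply Rle_Rpower; [lra | apply Rle_abs].
    - apply Rle_Rpower_l; [apply Rabs_pos | split; [lra | apply (m_of_le_linear b E y Hb HE Hy1)]]. }
  assert (Hlevel : 2 ^ length y * Rpower n (Rabs c) * n ^ 4 <= INR b ^ m).
  { rewrite <- (Rpower_pow 4 n), Rmult_assoc, <- Rpower_plus by lra.
    replace (Rabs c + INR 4) with E by (unfold E; simpl; lra).
    apply (pow_m_of_ge b E y Hb HE Hy1). }
  assert (HT : 0 < 2 ^ length y) by (apply pow_lt; lra).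
  assert (HP : 0 < Rpower n (Rabs c)) by apply exp_pos.
  assert (Hn3 : 0 < n ^ 3) by (apply pow_lt; lra).
  assert (HB : 0 < INR b ^ m) by (apply pow_lt, INR_b_pos, Hb).
  apply Rmult_le_reg_r with (INR b ^ m * n ^ 3); [nra|].
  replace (1 / n ^ 3 * (INR b ^ m * n ^ 3)) with (INR b ^ m) by (field; lra).
  replace (2 ^ length y * (2 * (Rpower (INR m) c / INR b ^ m)) * (INR b ^ m * n ^ 3))
    with (2 ^ length y * (2 * Rpower (INR m) c) * n ^ 3) by (field; lra).
  set (T := 2 ^ length y) in *; set (P := Rpower n (Rabs c)) in *.
  apply Rle_trans with (T * (n * P) * n ^ 3).
  - apply Rmult_le_compat_r, Rmult_le_compat_l; [lra | lra | nra].
  - replace (T * (n * P) * n ^ 3) with (T * P * n ^ 4) by ring; exact Hlevel.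
Qed.

Lemma gamma_le_of_growth (b : nat) (d : list nat -> R) (c : R) (m : nat) :
  (2 <= b)%nat -> (1 <= m)%nat ->
  (forall w, is_word b w -> w <> nil -> d w <= Rpower (INR (length w)) c) ->
  forall w, In w (words b m) -> gamma b d w <= Rpower (INR m) c / INR b ^ m.
Proof.
  intros Hb Hm Hgrowth w Hw; destruct (in_words _ _ _ Hw) as [Hww <-].
  apply Rdiv_le_compat_r; [apply pow_lt, INR_b_pos, Hb|].
  apply Hgrowth; [exact Hww | intros ->; simpl in Hm; lia].
Qed.

Theorem mainTheorem8 (b : nat) (d : list nat -> R) (c : R) :
  (2 <= b)%nat ->
  martingale b d ->
  d nil = 1 ->
  (forall w, is_word b w -> w <> nil -> d w <= Rpower (INR (length w)) c) ->
  exists c' : R, 0 < c' /\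
    exists N : nat, forall y : list nat, is_word 2 y -> (N <= length y)%nat ->
      Rabs (dd2 b d y - dd2_m b d (m_of b c' y) y) <= 1 / INR (length y) ^ 3.
Proof.
  intros Hb Hd _ Hgrowth.
  pose proof (log2_b_ge_1 b Hb).
  exists ((Rabs c + 4) / log2 (INR b)); split.
  { apply Rdiv_lt_0_compat; [pose proof (Rabs_pos c) |]; lra. }
  destruct (level_mass_decay b c Hb) as [N [HN Hdecay]].
  exists N; intros y _ Hy.
  set (m := m_of b ((Rabs c + 4) / log2 (INR b)) y).
  assert (Hm1 : (1 <= m)%nat) by (apply m_of_ge_1; [exact Hb | pose proof (Rabs_pos c); lra | lia]).
  eapply Rle_trans; [apply (dd2_sub_dd2_m_le b d Hb Hd m y (Rpower (INR m) c / INR b ^ m)) |].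
  - apply Rdiv_nonneg; [left; apply exp_pos | apply pow_lt, INR_b_pos, Hb].
  - apply gamma_le_of_growth; assumption.
  - apply Hdecay, Hy.
Qed.
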